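(* Let $n\ge 9$ be an integer and $n_0=\min\{k\in\mathbb{N}: n\le\tfrac12(k^3-k^2)\}$. Then $$\chi_{L_2}(C_n)=\begin{cases} n_0 & n\ne \tfrac12(n_0^3-n_0^2)-1,\\ n_0+1 & n=\tfrac12(n_0^3-n_0^2)-1.\end{cases}$$
   Context: All graphs are finite and simple; $C_n$ is the cycle on $n$ vertices. A proper $k$-coloring of $G$ is a map $f$ from $V(G)$ onto $[k]=\{1,\dots,k\}$ with adjacent vertices receiving different colors; $f(S)=\{f(u):u\in S\}$ and $N_G(u)$ is the neighborhood of $u$. A proper $k$-coloring $f$ is a neighbor locating coloring if for any two distinct vertices $u,v$ with $f(u)=f(v)$ we have $f(N_G(u))\ne f(N_G(v))$; $\chi_{L_2}(G)$ is the minimum number of colors in a neighbor locating coloring of $G$. *)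

From mathcomp Require Import all_boot.
Set Implicit Arguments. Unset Strict Implicit. Unset Printing Implicit Defensive.

(* A finite simple graph: vertex finType T with symmetric irreflexive adjacency e. *)

Definition nbhd (T : finType) (e : rel T) (u : T) : {set T} := [set v | e u v].

(* A proper k-coloring: a map ONTO the k colors (colors are 'I_k, i.e. 0..k-1,
   a relabeling of [k] = {1..k}), adjacent vertices get different colors. *)
Definition proper_coloring (T : finType) (e : rel T) (k : nat) (f : T -> 'I_k) : Prop :=
  (forall c : 'I_k, exists u : T, f u = c) /\
  (forall u v : T, e u v -> f u <> f v).

Definition neighbor_locating (T : finType) (e : rel T) (k : nat) (f : T -> 'I_k) : Prop :=
  proper_coloring e f /\
  (forall u v : T, u <> v -> f u = f v -> f @: nbhd e u <> f @: nbhd e v).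

Definition has_NLC (T : finType) (e : rel T) (k : nat) : Prop :=
  exists f : T -> 'I_k, neighbor_locating e f.

Definition is_chiL2 (T : finType) (e : rel T) (k : nat) : Prop :=
  has_NLC e k /\ forall k', has_NLC e k' -> k <= k'.

Definition cycle_rel (n : nat) : rel 'I_n :=
  fun i j => (j == (i.+1 %% n) :> nat) || (i == (j.+1 %% n) :> nat).
Arguments cycle_rel n : clear implicits.

From mathcomp Require Import all_boot zify.
Set Implicit Arguments. Unset Strict Implicit. Unset Printing Implicit Defensive.

(* A colouring of C_n is a cyclic word over the colours; it is neighbour
   locating iff consecutive letters differ and the states of its positions
   (a colour together with the unordered pair of colours around it) are
   pairwise distinct.  With k colours there are k * 'C(k, 2) = (k^3 - k^2)/2
   states, which gives the lower bound.  All states but one cannot occur: in a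
   cyclic word the steps a -> b and b -> a are equally frequent, so the states
   with middle a seeing b are as many as those with middle b seeing a, which
   fails for the two colours of the missing state.
   Conversely, words are built colour by colour.  The states containing a new
   colour z are those of the triangles c b z and the digons z b, and each of
   these closed walks can be spliced into the current word at a step it shares
   with it; adding suitably many triangles and digons realises every other
   length. *)

(** * Windows of cyclic words *)

(* A window [(p, x, q)] records a letter [x] of a cyclic word together with
   its predecessor [p] and successor [q]. *)
Definition window := (nat * nat * nat)%type.

Fixpoint windows_between (p : nat) (s : seq nat) (q : nat) : seq window :=
  if s is x :: s' then (p, x, head q s') :: windows_between x s' q else [::].

Definition windows (s : seq nat) : seq window :=
  windows_between (last 0 s) s (head 0 s).

Lemma size_windows_between p s q : size (windows_between p s q) = size s.
Proof. by elim: s p => //= x s IH p; rewrite IH. Qed.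

Lemma size_windows s : size (windows s) = size s.
Proof. exact: size_windows_between. Qed.

Lemma windows_between_cat p s1 s2 q :
  windows_between p (s1 ++ s2) q =
  windows_between p s1 (head q s2) ++ windows_between (last p s1) s2 q.
Proof.
elim: s1 p => [|x [|y s1] IH] p //=.
by move: (IH x) => /= ->.
Qed.

Lemma windows_between_rcons p s y q :
  windows_between p (rcons s y) q =
  rcons (windows_between p s y) (last p s, y, q).
Proof. by elim: s p => //= x [|z s] IH p; rewrite IH. Qed.

Lemma windows_rot1 s : windows (rot 1 s) = rot 1 (windows s).
Proof.
case: s => [|x s] //; rewrite rot1_cons /windows /= last_rcons.
rewrite windows_between_rcons rot1_cons.
by case: s.
Qed.

Lemma windows_rot i s : windows (rot i s) = rot i (windows s).
Proof.
case: (leqP i (size s)) => [|lt_s_i]; last first.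
  by rewrite !rot_oversize ?size_windows // ltnW.
elim: i => [|i IH] le_i_s; first by rewrite !rot0.
have rotS (T : Type) (t : seq T) : size t = size s -> rot i.+1 t = rot 1 (rot i t).
  by move=> szt; rewrite rot_add_mod ?add1n ?szt // (leq_trans _ le_i_s).
by rewrite rotS // windows_rot1 IH ?rotS ?size_windows // ltnW.
Qed.

Lemma nth_windows_between w0 p s q i : i < size s ->
  nth w0 (windows_between p s q) i =
  (if i is i'.+1 then nth 0 s i' else p, nth 0 s i,
   if i.+1 == size s then q else nth 0 s i.+1).
Proof.
elim: s p i => [|x s IH] p [|i] //= lt_i_s; first by case: s {IH lt_i_s}.
by rewrite IH //; case: i lt_i_s.
Qed.

Lemma nth_windows w0 s (i : 'I_(size s)) :
  nth w0 (windows s) i = (nth 0 s (ord_pred i), nth 0 s i, nth 0 s (ordS i)).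
Proof.
case: i => i lt_i_s; rewrite nth_windows_between //=; congr (_, _, _).
  case: i lt_i_s => [|i] lt_i_s; rewrite ?addSn ?modnDr modn_small ?nth_last //; last lia.
  by case: s lt_i_s.
case: eqP => [->|/eqP ne]; rewrite ?modnn ?nth0 // modn_small //; lia.
Qed.

Lemma windows_rot_to w s : w \in windows s -> 1 < size s ->
  exists R, perm_eq (windows [:: w.1.2, w.2 & R]) (windows s).
Proof.
move=> s_w s_gt1; set i := index w (windows s).
have [tl rot_s] : exists tl, windows (rot i s) = w :: tl.
  by rewrite windows_rot rot_index //; eexists.
have perm_rot_s : perm_eq (windows (rot i s)) (windows s).
  by rewrite windows_rot perm_rot.
move: rot_s perm_rot_s (size_rot i s).
case: (rot i s) => [|x [|y R]] /=; try by move=> _ _ sz; rewrite -sz in s_gt1.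
by move=> [<- _] perm_xyR _; exists R.
Qed.

Lemma perm_cat_swap (T : eqType) (s1 s2 : seq T) x :
  perm_eq (s1 ++ x :: s2) (s2 ++ x :: s1).
Proof.
by rewrite -cat1s perm_catCA perm_sym -cat1s perm_catCA /= perm_cons perm_catC.
Qed.

Lemma windows_splice b c Q R :
  perm_eq (windows [:: b, c & Q ++ [:: b, c & R]])
          (windows [:: b, c & R] ++ windows [:: b, c & Q]).
Proof.
rewrite /windows -[[:: b, c & _]]/([:: b, c & Q] ++ [:: b, c & R]).
rewrite windows_between_cat /= last_cat /=.
by rewrite perm_cons -2!cat_cons perm_cat_swap.
Qed.

Definition realizable (T : seq window) :=
  exists2 s, 1 < size s & perm_eq (windows s) T.

Definition has_step (T : seq window) b c :=
  has (fun w : window => (w.1.2 == b) && (w.2 == c)) T.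

Lemma has_step_catl T T' b c : has_step T b c -> has_step (T ++ T') b c.
Proof. by rewrite /has_step has_cat => ->. Qed.

Lemma has_step_catr T T' b c : has_step T' b c -> has_step (T ++ T') b c.
Proof. by rewrite /has_step has_cat => ->; rewrite orbT. Qed.

(* Splicing the closed walk [b c Q] into a walk at one of its steps [b -> c]. *)
Lemma realizable_splice T b c Q L : realizable T -> has_step T b c ->
  perm_eq L (windows [:: b, c & Q]) -> realizable (T ++ L).
Proof.
move=> [s s_gt1 perm_s] /hasP [w T_w /andP [/eqP wb /eqP wc]] perm_L.
rewrite -(perm_mem perm_s) in T_w.
have [R perm_R] := windows_rot_to T_w s_gt1; rewrite wb wc in perm_R.
exists [:: b, c & Q ++ [:: b, c & R]] => //.
apply: perm_trans (windows_splice _ _ _ _) _.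
by apply: perm_cat; [exact: perm_trans perm_R perm_s | rewrite perm_sym].
Qed.

(** * States and neighbour-locating colourings *)

(* The colour of a vertex together with the unordered pair of colours of its
   neighbours, stored as [(mid, min, max)]. *)
Definition state (w : window) : window := (w.1.2, minn w.1.1 w.2, maxn w.1.1 w.2).

Definition proper_window k (w : window) :=
  [&& w.1.1 != w.1.2, w.1.2 != w.2, w.1.1 < k, w.1.2 < k & w.2 < k].

Definition locating_windows k (T : seq window) :=
  [&& uniq (map state T), all (proper_window k) T &
      all (fun c => c \in [seq w.1.2 | w <- T]) (iota 0 k)].

Lemma locating_windows_perm k T1 T2 :
  perm_eq T1 T2 -> locating_windows k T1 = locating_windows k T2.
Proof.
move=> perm_T; rewrite /locating_windows (perm_uniq (perm_map state perm_T)).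
by rewrite (perm_all _ perm_T) (eq_all (perm_mem (perm_map _ perm_T))).
Qed.

Lemma nbhd_cycle n (u : 'I_n) : nbhd (cycle_rel n) u = [set ordS u; ord_pred u].
Proof.
apply/setP => v; rewrite /nbhd !inE /cycle_rel.
congr (_ || _); apply/eqP/eqP => [uE | ->].
  by rewrite -(ordSK v); congr ord_pred; apply: val_inj.
by rewrite -[in LHS](ord_predK u).
Qed.

Lemma cycle_rel_ordS n (u : 'I_n) : cycle_rel n u (ordS u).
Proof. by rewrite /cycle_rel eqxx. Qed.

Lemma set2_ordE k (a b c d : 'I_k) :
  ([set a; b] == [set c; d]) = (minn a b == minn c d) && (maxn a b == maxn c d).
Proof.
apply/eqP/andP => [E | [/eqP minE /eqP maxE]].
  have ab : (a \in [set c; d]) && (b \in [set c; d]) by rewrite -E !inE !eqxx orbT.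
  have cd : (c \in [set a; b]) && (d \in [set a; b]) by rewrite E !inE !eqxx orbT.
  by move: ab cd; rewrite !inE -!val_eqE /=; lia.
have /orP [] : ((a == c) && (b == d)) || ((a == d) && (b == c)) by rewrite -!val_eqE /=; lia.
  by case/andP => /eqP -> /eqP ->.
by case/andP => /eqP -> /eqP ->; rewrite setUC.
Qed.

Lemma state_windows_inj s (u v : 'I_(size s)) : uniq (map state (windows s)) ->
  state (nth (0, 0, 0) (windows s) u) = state (nth (0, 0, 0) (windows s) v) -> u = v.
Proof.
move=> uniq_s Euv; apply/eqP; rewrite -val_eqE /=.
rewrite -(nth_uniq (0, 0, 0) _ _ uniq_s) ?size_map ?size_windows //.
by rewrite !(nth_map (0, 0, 0)) ?size_windows // Euv.
Qed.

Lemma has_NLC_windows k s :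
  locating_windows k (windows s) -> has_NLC (cycle_rel (size s)) k.
Proof.
case/and3P => uniq_s /(all_nthP (0, 0, 0)) proper_s /allP colors_s.
have {}proper_s (u : 'I_(size s)) : proper_window k (nth (0, 0, 0) (windows s) u).
  by apply: proper_s; rewrite size_windows.
have color_lt (u : 'I_(size s)) : nth 0 s u < k.
  by have := proper_s u; rewrite nth_windows => /and5P [].
exists (fun u => Ordinal (color_lt u)); split; first split.
- move=> c; have /mapP [w s_w wE] : (c : nat) \in [seq w.1.2 | w <- windows s].
    by apply: colors_s; rewrite mem_iota ltn_ord.
  have lt_i : index w (windows s) < size s by rewrite -size_windows index_mem.
  exists (Ordinal lt_i); apply: val_inj => /=.
  have := nth_windows (0, 0, 0) (Ordinal lt_i); rewrite /= nth_index // wE.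
  by move=> /(congr1 (fun w : window => w.1.2)) ->.
- have adj (u : 'I_(size s)) : nth 0 s u != nth 0 s (ordS u).
    by have := proper_s u; rewrite nth_windows => /and5P [].
  move=> u v; rewrite /cycle_rel => /orP [] /eqP uvE /(congr1 val) /= Euv.
    by move: (adj u); rewrite Euv [ordS u](_ : _ = v) ?eqxx //; apply: val_inj.
  by move: (adj v); rewrite -Euv [ordS v](_ : _ = u) ?eqxx //; apply: val_inj.
- move=> u v neq_uv Euv /eqP; rewrite !nbhd_cycle !imsetU1 !imset_set1 set2_ordE /=.
  case/andP => /eqP minE /eqP maxE; apply: neq_uv; apply: (state_windows_inj uniq_s).
  move/(congr1 val): Euv; rewrite !nth_windows /state /= => ->.
  by rewrite minnC maxnC minE maxE minnC maxnC.
Qed.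

Lemma windows_of_NLC n k (f : 'I_n -> 'I_k) : neighbor_locating (cycle_rel n) f ->
  exists2 s, size s = n & uniq (map state (windows s)) && all (proper_window k) (windows s).
Proof.
move=> [[_ proper_f] locating_f].
have [s sz_s fE] : exists2 s : seq nat, size s = n & forall u : 'I_n, nth 0 s u = f u.
  exists [seq val (f u) | u <- enum 'I_n]; first by rewrite size_map size_enum_ord.
  by move=> u; rewrite (nth_map u) ?size_enum_ord // nth_ord_enum.
exists s => //; subst n; apply/andP; split.
  apply/(uniqP (0, 0, 0)) => i j; rewrite !inE size_map size_windows => lt_i lt_j.
  rewrite !(nth_map (0, 0, 0)) ?size_windows //.
  change (state (nth (0, 0, 0) (windows s) (Ordinal lt_i)) =
          state (nth (0, 0, 0) (windows s) (Ordinal lt_j)) -> i = j).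
  rewrite !nth_windows !fE /state /= => -[/val_inj Ef minE maxE].
  suff: Ordinal lt_i = Ordinal lt_j by case.
  have [//|/eqP neq_ij] := eqVneq (Ordinal lt_i) (Ordinal lt_j).
  case: (locating_f _ _ neq_ij Ef).
  apply/eqP; rewrite !nbhd_cycle !imsetU1 !imset_set1 set2_ordE.
  by rewrite minnC maxnC minE maxE minnC maxnC !eqxx.
apply/(all_nthP (0, 0, 0)) => i; rewrite size_windows => lt_i.
change (proper_window k (nth (0, 0, 0) (windows s) (Ordinal lt_i))).
rewrite nth_windows !fE /proper_window !ltn_ord !andbT.
have neq_next (u : 'I_(size s)) : (f u : nat) != f (ordS u).
  by apply/negP => /eqP /val_inj; apply: proper_f; apply: cycle_rel_ordS.
by rewrite neq_next -[in X in _ != X](ord_predK (Ordinal lt_i)) neq_next.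
Qed.

(** * Counting states *)

Definition is_state k (w : window) :=
  [&& w.1.2 <= w.2, w.1.2 != w.1.1, w.2 != w.1.1, w.1.1 < k & w.2 < k].

Lemma is_state_state k w : proper_window k w -> is_state k (state w).
Proof. by case: w => [[p x] q]; rewrite /proper_window /is_state /state /=; lia. Qed.

Fixpoint ltn_pairs z : seq (nat * nat) :=
  if z is z'.+1 then ltn_pairs z' ++ [seq (a, z') | a <- iota 0 z'] else [::].

Lemma size_ltn_pairs z : size (ltn_pairs z) = 'C(z, 2).
Proof.
by elim: z => //= z IH; rewrite size_cat IH size_map size_iota binS bin1.
Qed.

Lemma mem_ltn_pairs z p : (p \in ltn_pairs z) = (p.1 < p.2 < z).
Proof.
case: p => a b /=; elim: z => [|z IH] /=; first by rewrite in_nil; lia.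
rewrite mem_cat IH; apply/orP/idP => [[|/mapP [c]] | lt_abz]; first lia.
  by rewrite mem_iota => lt_c [-> ->]; lia.
case: (ltnP b z) => [lt_bz | le_zb]; [left; lia | right].
by apply/mapP; exists a; [rewrite mem_iota; lia | congr pair; lia].
Qed.

Lemma uniq_ltn_pairs z : uniq (ltn_pairs z).
Proof.
elim: z => //= z IH; rewrite cat_uniq IH map_inj_uniq ?iota_uniq ?andbT; last first.
  by move=> x y [].
by apply/hasP => -[p /mapP [x _ ->]]; rewrite mem_ltn_pairs /=; lia.
Qed.

Lemma two_bin2 k : 2 * 'C(k, 2) = k * k.-1.
Proof. by rewrite (mul_bin_left k 1) bin1 mulnC subn1. Qed.

Lemma ltn_bin2 b z : b < z -> 1 < z -> 'C(b, 2) < 'C(z, 2).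
Proof.
move=> lt_bz z_gt1; have := two_bin2 b; have := two_bin2 z.
by case: b lt_bz => [|b]; case: z z_gt1 => [|z] //=; nia.
Qed.

Lemma states_succ z : z.+1 * 'C(z.+1, 2) = z * 'C(z, 2) + 3 * 'C(z, 2) + 2 * z.
Proof. by rewrite binS bin1; have := two_bin2 z; case: z => [|z] //=; nia. Qed.

Lemma cube_sub_square k : k ^ 3 - k ^ 2 = 2 * (k * 'C(k, 2)).
Proof. by rewrite mulnCA two_bin2; case: k => [|k] //=; rewrite !expnS expn0; nia. Qed.

(* Deleting the colour [x] of the middle vertex from the palette turns the
   states with middle [x] into the pairs [a < c] of colours below [k]; hence
   there are [k * 'C(k, 2)] states with [k] colours. *)
Definition pack_state (w : window) : window :=
  (w.1.1, w.1.2 - (w.1.1 < w.1.2), (w.2 - (w.1.1 < w.2)).+1).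

Definition unpack_state (w : window) : window :=
  (w.1.1, w.1.2 + (w.1.1 <= w.1.2), w.2.-1 + (w.1.1 <= w.2.-1)).

Definition packed_states k : seq window :=
  [seq (x, p.1, p.2) | x <- iota 0 k, p <- ltn_pairs k].

Lemma size_packed_states k : size (packed_states k) = k * 'C(k, 2).
Proof. by rewrite size_allpairs size_iota size_ltn_pairs. Qed.

Lemma mem_packed_states k w : (w \in packed_states k) = (w.1.1 < k) && (w.1.2 < w.2 < k).
Proof.
case: w => [[x a] c] /=; apply/allpairsP/idP => [[[y [a' c']] /= [y_k p_k [-> -> ->]]]|w_k].
  by move: y_k p_k; rewrite mem_iota mem_ltn_pairs /=; lia.
by exists (x, (a, c)); split => //=; rewrite ?mem_iota ?mem_ltn_pairs /=; lia.
Qed.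

Lemma uniq_packed_states k : uniq (packed_states k).
Proof.
apply: allpairs_uniq; rewrite ?iota_uniq ?uniq_ltn_pairs //.
by move=> [x1 [a1 c1]] [x2 [a2 c2]] _ _ [-> -> ->].
Qed.

Lemma pack_stateP k w : is_state k w -> pack_state w \in packed_states k.
Proof.
case: w => [[x a] c]; rewrite /is_state mem_packed_states /pack_state /=.
by case: ltnP => ?; case: ltnP => ?; lia.
Qed.

Lemma pack_state_inj k w w' :
  is_state k w -> is_state k w' -> pack_state w = pack_state w' -> w = w'.
Proof.
move: w w' => [[x a] c] [[x' a'] c']; rewrite /is_state /pack_state /= => w_k w'_k [xE].
subst x'; do 4 (case: ltnP => ?); move=> /= *; apply/eqP; rewrite !xpair_eqE; lia.
Qed.

Lemma unpack_stateP k w : w \in packed_states k -> is_state k (unpack_state w).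
Proof.
case: w => [[x a] c]; rewrite mem_packed_states /is_state /unpack_state /=.
by case: leqP => ?; case: leqP => ?; lia.
Qed.

Lemma unpack_stateK k w : w \in packed_states k -> pack_state (unpack_state w) = w.
Proof.
case: w => [[x a] c]; rewrite mem_packed_states /pack_state /unpack_state /= => w_k.
by apply/eqP; rewrite !xpair_eqE; do 4 case: leqP => ?; rewrite /=; lia.
Qed.

Lemma size_uniq_states k L : uniq L -> all (is_state k) L -> size L <= k * 'C(k, 2).
Proof.
move=> uniq_L /allP L_k; rewrite -size_packed_states -(size_map pack_state L).
apply: uniq_leq_size.
  by rewrite map_inj_in_uniq // => w w' /L_k w_k /L_k; apply: pack_state_inj.
by move=> _ /mapP [w /L_k w_k ->]; apply: pack_stateP.
Qed.

Lemma missing_state k L : uniq L -> all (is_state k) L ->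
  size L = (k * 'C(k, 2)).-1 -> 0 < k * 'C(k, 2) ->
  exists w0, [/\ is_state k w0, w0 \notin L &
                 forall w, is_state k w -> w \notin L -> w = w0].
Proof.
move=> uniq_L L_k size_L states_gt0.
have [w0 w0_k L'w0] : exists2 w0, is_state k w0 & w0 \notin L.
  case: (boolP (has (fun p => unpack_state p \notin L) (packed_states k))).
    by case/hasP => p p_k L'p; exists (unpack_state p); first exact: unpack_stateP.
  move=> /hasPn all_in.
  have : size (packed_states k) <= size (map pack_state L).
    apply: uniq_leq_size (uniq_packed_states k) _ => p p_k.
    by rewrite -(unpack_stateK p_k) map_f // -[_ \in _]negbK all_in.
  by rewrite size_map size_L size_packed_states; lia.
exists w0; split=> // w w_k L'w; apply/eqP/negPn/negP => neq_w_w0.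
have := @size_uniq_states k [:: w, w0 & L].
by rewrite /= inE negb_or neq_w_w0 L'w L'w0 uniq_L w_k w0_k L_k size_L => /(_ isT isT); lia.
Qed.

Lemma steps_windows_between x s q :
  (x, head q s) :: [seq (w.1.2, w.2) | w : window <- windows_between x s q] =
  rcons [seq (w.1.1, w.1.2) | w : window <- windows_between x s q] (last x s, q).
Proof. by elim: s x => [|y s IH] x //=; rewrite -IH. Qed.

Lemma count_steps_windows (P : pred (nat * nat)) s :
  count (fun w : window => P (w.1.2, w.2)) (windows s) =
  count (fun w : window => P (w.1.1, w.1.2)) (windows s).
Proof.
rewrite -(count_map (fun w : window => (w.1.2, w.2)) P).
rewrite -(count_map (fun w : window => (w.1.1, w.1.2)) P).
apply/permP; case: s => [|x s] //.
by rewrite /windows /= steps_windows_between perm_rcons.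
Qed.

(* A state [(b, a, a)] counts twice, once for each step between [a] and [b]. *)
Definition nbr_count b a (L : seq window) :=
  count (fun w : window => (w.1.1 == b) && (w.1.2 == a)) L +
  count (fun w : window => (w.1.1 == b) && (w.2 == a)) L.

Lemma nbr_count_state b a T :
  nbr_count b a (map state T) =
  count (fun w : window => (w.1.1 == a) && (w.1.2 == b)) T +
  count (fun w : window => (w.1.2 == b) && (w.2 == a)) T.
Proof.
elim: T => [|[[p x] q] T IH] //=; rewrite /nbr_count /= in IH *.
by case: (x == b) => /=; lia.
Qed.

Lemma nbr_count_windows b a s :
  nbr_count b a (map state (windows s)) = nbr_count a b (map state (windows s)).
Proof.
rewrite !nbr_count_state addnC.
have /= -> := count_steps_windows (fun e => (e.1 == b) && (e.2 == a)) s.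
by have /= -> := count_steps_windows (fun e => (e.1 == a) && (e.2 == b)) s.
Qed.

Definition states_min k b a : seq window := [seq (b, a, q) | q <- iota a (k - a) & q != b].
Definition states_max b a : seq window := [seq (b, p, a) | p <- iota 0 a.+1 & p != b].

Lemma count_neq m l b : count (fun q => q != b) (iota m l) = l - (m <= b < m + l).
Proof.
have := count_predC (pred1 b) (iota m l).
rewrite size_iota (count_uniq_mem _ (iota_uniq m l)) mem_iota.
by rewrite -[count (predC _) _]/(count (fun q => q != b) _); lia.
Qed.

Lemma size_states_min_max k b a : a < k -> b < k -> a != b ->
  size (states_min k b a) + size (states_max b a) = k.
Proof. by move=> *; rewrite !size_map !size_filter !count_neq; lia. Qed.

Lemma mem_states_min k b a w : b < k -> a != b ->
  (w \in states_min k b a) = [&& is_state k w, w.1.1 == b & w.1.2 == a].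
Proof.
case: w => [[x y] q] /= b_k neq_ab; rewrite /is_state /=.
apply/mapP/idP => [[q' q'_in [-> -> ->]] | w_k].
  by move: q'_in; rewrite mem_filter mem_iota /=; lia.
by exists q; [rewrite mem_filter mem_iota | apply/eqP; rewrite !xpair_eqE]; lia.
Qed.

Lemma mem_states_max k b a w : a < k -> b < k -> a != b ->
  (w \in states_max b a) = [&& is_state k w, w.1.1 == b & w.2 == a].
Proof.
case: w => [[x p] y] /= a_k b_k neq_ab; rewrite /is_state /=.
apply/mapP/idP => [[p' p'_in [-> -> ->]] | w_k].
  by move: p'_in; rewrite mem_filter mem_iota /=; lia.
by exists p; [rewrite mem_filter mem_iota | apply/eqP; rewrite !xpair_eqE]; lia.
Qed.

Lemma nbr_count_lt k b a q L : uniq L -> all (is_state k) L ->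
  is_state k (b, a, q) -> (b, a, q) \notin L -> nbr_count b a L < k.
Proof.
move=> uniq_L /allP L_k w0_k L'w0.
case/and5P: (w0_k) => /= le_aq neq_ab _ b_k q_k; have a_k := leq_ltn_trans le_aq q_k.
rewrite -(size_states_min_max a_k b_k neq_ab) /nbr_count -!size_filter.
have min_lt : (size [seq w <- L | (w.1.1 == b) && (w.1.2 == a)]).+1 <= size (states_min k b a).
  apply: (uniq_leq_size (s1 := (b, a, q) :: _)) => [|w].
    by rewrite /= filter_uniq // mem_filter (negbTE L'w0) andbF.
  rewrite inE mem_states_min // mem_filter => /predU1P [-> | /andP [-> /L_k ->]] //.
  by rewrite w0_k !eqxx.
have max_le : size [seq w <- L | (w.1.1 == b) && (w.2 == a)] <= size (states_max b a).
  apply: uniq_leq_size => [|w]; first exact: filter_uniq.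
  by rewrite mem_filter (mem_states_max (k := k)) // => /andP [-> /L_k ->].
by rewrite -addSn leq_add.
Qed.

Lemma nbr_count_ge k a b L : a < k -> b < k -> a != b ->
  (forall w, is_state k w -> w.1.1 = a -> w \in L) -> k <= nbr_count a b L.
Proof.
move=> a_k b_k neq_ab all_a; rewrite eq_sym in neq_ab.
rewrite -(size_states_min_max b_k a_k neq_ab) /nbr_count -!size_filter.
apply: leq_add; apply: uniq_leq_size.
- by rewrite map_inj_uniq ?filter_uniq ?iota_uniq // => x y [].
- move=> w; rewrite mem_states_min // mem_filter => /and3P [w_k /eqP wa ->].
  by rewrite wa eqxx all_a.
- by rewrite map_inj_uniq ?filter_uniq ?iota_uniq // => x y [].
move=> w; rewrite (mem_states_max (k := k)) // mem_filter => /and3P [w_k /eqP wa ->].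
by rewrite wa eqxx all_a.
Qed.

Lemma windows_not_almost_full k s :
  uniq (map state (windows s)) -> all (proper_window k) (windows s) ->
  size s = (k * 'C(k, 2)).-1 -> 0 < k * 'C(k, 2) -> False.
Proof.
move=> uniq_s proper_s size_s states_gt0; set L := map state (windows s).
have L_k : all (is_state k) L.
  by rewrite all_map; apply: sub_all proper_s => w; apply: is_state_state.
have size_L : size L = (k * 'C(k, 2)).-1 by rewrite size_map size_windows.
have [[[b a] q] [w0_k L'w0 missing]] := missing_state uniq_s L_k size_L states_gt0.
case/and5P: (w0_k) => /= le_aq neq_ab _ b_k q_k; have a_k := leq_ltn_trans le_aq q_k.
have := nbr_count_lt uniq_s L_k w0_k L'w0.
rewrite nbr_count_windows ltnNge (nbr_count_ge a_k b_k neq_ab) // => w w_k wa.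
by apply/negPn/negP => /(missing _ w_k) w0E; move: wa; rewrite w0E /=; lia.
Qed.

Lemma NLC_le_states n k : has_NLC (cycle_rel n) k -> n <= k * 'C(k, 2).
Proof.
case=> f /windows_of_NLC [s <- /andP [uniq_s proper_s]].
rewrite -size_windows -(size_map state); apply: size_uniq_states uniq_s _.
by rewrite all_map; apply: sub_all proper_s => w; apply: is_state_state.
Qed.

Lemma NLC_not_almost_full n k : 0 < n -> has_NLC (cycle_rel n) k -> n != (k * 'C(k, 2)).-1.
Proof.
move=> n_gt0 NLC_k; apply/eqP => nE; have := NLC_le_states NLC_k.
case: NLC_k => f /windows_of_NLC [s size_s /andP [uniq_s proper_s]] le_n.
by apply: (windows_not_almost_full uniq_s proper_s); lia.
Qed.

(** * Adding a colour *)

Lemma ltn_pairs_prefix w z : w <= z -> exists rest, ltn_pairs z = ltn_pairs w ++ rest.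
Proof.
elim: z => [|z IH] le_wz; first by case: w le_wz => // _; exists [::].
case: (ltnP w z.+1) => [lt_wz | le_zw]; last first.
  have -> : w = z.+1 by lia.
  by exists [::]; rewrite cats0.
have [r rE] := IH lt_wz; exists (r ++ [seq (b, z) | b <- iota 0 z]).
by rewrite /= rE catA.
Qed.

Lemma pair0_in_take z b t : 0 < b < z -> 'C(b, 2) < t -> (0, b) \in take t (ltn_pairs z).
Proof.
move=> /andP [b_gt0 lt_bz] lt_t; have [r ->] := ltn_pairs_prefix lt_bz.
rewrite /= -catA take_cat size_ltn_pairs ltnNge (ltnW lt_t) /= mem_cat.
have -> : t - 'C(b, 2) = (t - 'C(b, 2)).-1.+1 by lia.
by case: b b_gt0 {lt_t lt_bz} => [|b] // _; rewrite /= in_cons eqxx orbT.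
Qed.

Lemma uniq_flatten_map (A B : eqType) (f : A -> seq B) xs :
  uniq xs -> {in xs, forall x, uniq (f x)} ->
  (forall x y s, x \in xs -> y \in xs -> s \in f x -> s \in f y -> x = y) ->
  uniq (flatten (map f xs)).
Proof.
elim: xs => //= x xs IH /andP [xs'x uniq_xs] uniq_f disj_f.
rewrite cat_uniq uniq_f ?mem_head //= IH //; last 2 first.
- by move=> y xs_y; apply: uniq_f; rewrite in_cons xs_y orbT.
- by move=> y z s xs_y xs_z; apply: disj_f; rewrite in_cons ?xs_y ?xs_z orbT.
rewrite andbT; apply/hasP => -[s /flatten_mapP [y xs_y fy_s] fx_s].
have xy : x = y by apply: (disj_f x y s); rewrite ?in_cons ?eqxx ?xs_y ?orbT.
by move: xs'x; rewrite xy xs_y.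
Qed.

Lemma size_flatten_map_const (A B : Type) (f : A -> seq B) c xs :
  (forall x, size (f x) = c) -> size (flatten (map f xs)) = c * size xs.
Proof.
by move=> size_f; elim: xs => [|x xs IH] /=; rewrite ?muln0 // size_cat IH size_f mulnS.
Qed.

(* [level z t d] adds the first [t] triangles [c b z] ([b < c < z]) and the
   first [d] digons [z b] through the new colour [z].  The states in which [z]
   occurs are exactly the states of all [3 * 'C(z, 2)] triangles and all
   [2 * z] digons. *)
Definition triangles z t : seq window :=
  flatten [seq windows [:: p.2; p.1; z] | p <- take t (ltn_pairs z)].

Definition digons z d : seq window := flatten [seq windows [:: z; b] | b <- iota 0 d].

Definition level z t d := triangles z t ++ digons z d.

Lemma size_level z t d : t <= 'C(z, 2) -> size (level z t d) = 3 * t + 2 * d.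
Proof.
move=> le_t; rewrite size_cat (size_flatten_map_const (c := 3)) //.
rewrite (size_flatten_map_const (c := 2)) //.
by rewrite size_iota size_take size_ltn_pairs; case: ltngtP le_t; lia.
Qed.

Lemma map_state_triangle b c z : b < c < z ->
  map state (windows [:: c; b; z]) = [:: (c, b, z); (b, c, z); (z, b, c)].
Proof.
by move=> lt_bcz; rewrite /= /state /=; congr [:: (_, _, _); (_, _, _); (_, _, _)]; lia.
Qed.

Lemma map_state_digon b z : b < z -> map state (windows [:: z; b]) = [:: (z, b, b); (b, z, z)].
Proof. by move=> lt_bz; rewrite /= /state /=; congr [:: (_, _, _); (_, _, _)]; lia. Qed.

Lemma mem_state_triangles z t w : w \in map state (triangles z t) ->
  exists b c, b < c < z /\ [\/ w = (c, b, z), w = (b, c, z) | w = (z, b, c)].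
Proof.
rewrite map_flatten -map_comp => /flatten_mapP [p /mem_take].
rewrite mem_ltn_pairs => p_z; rewrite /comp (map_state_triangle p_z) !inE => w_in.
exists p.1, p.2; split=> //.
by case/or3P: w_in => /eqP ->; [apply: Or31 | apply: Or32 | apply: Or33].
Qed.

Lemma mem_state_digons z d w : d <= z -> w \in map state (digons z d) ->
  exists2 b, b < z & w = (z, b, b) \/ w = (b, z, z).
Proof.
move=> le_dz; rewrite map_flatten -map_comp => /flatten_mapP [b].
rewrite mem_iota => b_d; have lt_bz : b < z by lia.
rewrite /comp (map_state_digon lt_bz) !inE => w_in; exists b => //.
by case/orP: w_in => /eqP ->; [left | right].
Qed.

Lemma uniq_state_triangles z t : uniq (map state (triangles z t)).
Proof.
rewrite map_flatten -map_comp; apply: uniq_flatten_map.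
- by rewrite take_uniq // uniq_ltn_pairs.
- move=> [b c] /mem_take; rewrite mem_ltn_pairs => lt_bcz.
  by rewrite /comp (map_state_triangle lt_bcz) /= !inE !xpair_eqE; move: lt_bcz => /=; lia.
move=> [b c] [b' c'] w /mem_take + /mem_take; rewrite !mem_ltn_pairs => lt_bcz lt_bcz'.
rewrite /comp (map_state_triangle lt_bcz) (map_state_triangle lt_bcz') !inE.
move: lt_bcz lt_bcz' => /= lt_bcz lt_bcz'.
by case/or3P => /eqP -> /or3P []; rewrite !xpair_eqE => E; apply/eqP; rewrite xpair_eqE; lia.
Qed.

Lemma uniq_state_digons z d : d <= z -> uniq (map state (digons z d)).
Proof.
move=> le_dz; rewrite map_flatten -map_comp; apply: uniq_flatten_map.
- exact: iota_uniq.
- move=> b; rewrite mem_iota => b_d; have lt_bz : b < z by lia.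
  by rewrite /comp (map_state_digon lt_bz) /= !inE !xpair_eqE; lia.
move=> b b' w; rewrite !mem_iota => b_d b'_d; have lt_bz : b < z by lia.
have lt_bz' : b' < z by lia.
rewrite /comp (map_state_digon lt_bz) (map_state_digon lt_bz') !inE.
by case/orP => /eqP -> /orP []; rewrite !xpair_eqE => E; apply/eqP; lia.
Qed.

Lemma uniq_state_level z t d : d <= z -> uniq (map state (level z t d)).
Proof.
move=> le_dz; rewrite map_cat cat_uniq uniq_state_triangles uniq_state_digons // andbT /=.
apply/hasP => -[w /(mem_state_digons le_dz) [b lt_bz wE]].
case/mem_state_triangles => [b' [c [lt_bcz w'E]]].
by case: wE w'E => -> [] /eqP; rewrite !xpair_eqE; lia.
Qed.

Lemma all_proper_level z t d : d <= z -> all (proper_window z.+1) (level z t d).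
Proof.
move=> le_dz; rewrite all_cat; apply/andP; split; apply/allP => w.
  move=> /flatten_mapP [[b c] /mem_take]; rewrite mem_ltn_pairs /= => lt_bcz.
  by rewrite !inE => /or3P [] /eqP ->; rewrite /proper_window /=; lia.
move=> /flatten_mapP [b]; rewrite mem_iota => b_d.
by rewrite /= !inE => /orP [] /eqP ->; rewrite /proper_window /=; lia.
Qed.

Lemma mid_level z t d : 1 < z -> 0 < t + d -> z \in [seq w.1.2 | w <- level z t d].
Proof.
move=> z_gt1 td_gt0; rewrite map_cat mem_cat; case: (posnP t) => [t0 | t_gt0].
  case: d td_gt0 => [|d]; first by rewrite t0.
  by rewrite /digons /= in_cons eqxx orbT.
apply/orP; left; apply/mapP; exists (0, z, 1) => //; apply/flatten_mapP.
by exists (0, 1); [apply: pair0_in_take | rewrite /= !inE eqxx !orbT].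
Qed.

Lemma locating_level z t d B : 1 < z -> d <= z -> 0 < t + d ->
  locating_windows z B -> locating_windows z.+1 (B ++ level z t d).
Proof.
move=> z_gt1 le_dz td_gt0 /and3P [uniq_B proper_B colors_B].
apply/and3P; split.
- rewrite map_cat cat_uniq uniq_B uniq_state_level // andbT.
  apply/hasP => -[s s_in /mapP [w B_w sE]]; have := allP proper_B w B_w.
  move: s_in; rewrite sE; case: w {B_w sE} => [[p x] q].
  rewrite /proper_window /state /= map_cat mem_cat => + w_z.
  case/orP => [/mem_state_triangles [b [c [_ wE]]] | /(mem_state_digons le_dz) [b _ wE]].
    by case: wE => /eqP; rewrite !xpair_eqE; lia.
  by case: wE => /eqP; rewrite !xpair_eqE; lia.
- rewrite all_cat all_proper_level // andbT.
  by apply: sub_all proper_B => w; rewrite /proper_window; lia.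
rewrite -addn1 iotaD all_cat /= andbT map_cat mem_cat mid_level // orbT andbT.
by apply: sub_all colors_B => c; rewrite map_cat mem_cat => ->.
Qed.

Lemma realizable_triangles z B ps : realizable B ->
  (forall p, p \in ps -> has_step B p.2 p.1) ->
  realizable (B ++ flatten [seq windows [:: p.2; p.1; z] | p <- ps]).
Proof.
elim: ps B => [|p ps IH] B real_B steps_B; first by rewrite cats0.
rewrite map_cons -[flatten (_ :: _)]/(_ ++ _) catA; apply: IH.
  by apply: (realizable_splice (Q := [:: z])) => //; apply: steps_B; rewrite mem_head.
by move=> q ps_q; apply: has_step_catl; apply: steps_B; rewrite in_cons ps_q orbT.
Qed.

Lemma realizable_digons z B bs : realizable B ->
  (forall b, b \in bs -> has_step B z b || has_step B b z) ->
  realizable (B ++ flatten [seq windows [:: z; b] | b <- bs]).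
Proof.
elim: bs B => [|b bs IH] B real_B steps_B; first by rewrite cats0.
rewrite map_cons -[flatten (_ :: _)]/(_ ++ _) catA; apply: IH => [|c bs_c].
  case/orP: (steps_B b (mem_head _ _)) => step_B.
    exact: (realizable_splice (Q := [::])) step_B _.
  exact: (realizable_splice (Q := [::]) real_B step_B (perm_cat_swap [::] [:: _] _)).
have /orP [] : has_step B z c || has_step B c z by apply: steps_B; rewrite in_cons bs_c orbT.
  by move=> step_B; apply/orP; left; apply: has_step_catl.
by move=> step_B; apply/orP; right; apply: has_step_catl.
Qed.

Lemma has_step_triangles z t b : 0 < b < z -> 'C(b, 2) < t ->
  has_step (triangles z t) 0 z && has_step (triangles z t) z b.
Proof.
move=> b_z lt_t; have pairs_0b := pair0_in_take b_z lt_t.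
have in_tri w : w \in windows [:: b; 0; z] -> w \in triangles z t.
  by move=> w_in; apply/flatten_mapP; exists (0, b).
by apply/andP; split; apply/hasP; [exists (b, 0, z) | exists (0, z, b)];
  rewrite ?eqxx // in_tri //= !inE eqxx ?orbT.
Qed.

Lemma realizable_level z t d B : 1 < z -> d <= z -> realizable B ->
  (forall p, p \in take t (ltn_pairs z) -> has_step B p.2 p.1) ->
  (forall b, b < d -> 'C(b, 2) < t) ->
  realizable (B ++ level z t d).
Proof.
move=> z_gt1 le_dz real_B steps_B tri_t; rewrite /level catA.
apply: realizable_digons; first exact: realizable_triangles.
move=> b; rewrite mem_iota add0n => /andP [_ b_d]; have lt_t := tri_t b b_d.
case: (posnP b) => [b0 | b_gt0].
  rewrite b0 in lt_t *.
  have /andP [step _] := has_step_triangles (z_gt1 : 0 < 1 < z) (lt_t : 'C(1, 2) < t).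
  by apply/orP; right; apply: has_step_catr.
have b_z : 0 < b < z by rewrite b_gt0 (leq_trans b_d le_dz).
have /andP [_ step] := has_step_triangles b_z lt_t.
by apply/orP; left; apply: has_step_catr.
Qed.

(* All states on the [m.+2] colours below [m.+2]. *)
Fixpoint full_levels m : seq window :=
  if m is m'.+1 then full_levels m' ++ level m'.+2 'C(m'.+2, 2) m'.+2
  else windows [:: 0; 1].

Lemma size_full_levels m : size (full_levels m) = m.+2 * 'C(m.+2, 2).
Proof.
elim: m => // m IH; rewrite -[full_levels _]/(full_levels m ++ _) size_cat IH.
by rewrite size_level // (states_succ m.+2) addnA.
Qed.

Lemma locating_full_levels m : locating_windows m.+2 (full_levels m).
Proof.
by elim: m => // m IH; apply: locating_level => //; rewrite addn_gt0 orbT.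
Qed.

Lemma has_step_full_levels m a b : a != b -> a < m.+2 -> b < m.+2 ->
  has_step (full_levels m) a b.
Proof.
elim: m a b => [|m IH] a b neq_ab a_m b_m.
  have /orP [] : (a == 0) && (b == 1) || (a == 1) && (b == 0) by lia.
    by case/andP => /eqP -> /eqP ->.
  by case/andP => /eqP -> /eqP ->.
have digon_steps c : c < m.+2 ->
    has_step (full_levels m.+1) m.+2 c && has_step (full_levels m.+1) c m.+2.
  move=> c_m; have in_level w :
      w \in windows [:: m.+2; c] -> w \in level m.+2 'C(m.+2, 2) m.+2.
    move=> w_in; rewrite mem_cat; apply/orP; right.
    by apply/flatten_mapP; exists c; rewrite ?mem_iota.
  by apply/andP; split; apply: has_step_catr; apply/hasP;
    [exists (c, m.+2, c) | exists (m.+2, c, m.+2)]; rewrite ?eqxx // in_level //= !inE eqxx ?orbT.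
case: (ltnP a m.+2) => [a_m' | m_a]; case: (ltnP b m.+2) => [b_m' | m_b].
- exact/has_step_catl/IH.
- by have /andP [] := digon_steps a a_m'; rewrite (_ : b = m.+2) //; lia.
- by have /andP [] := digon_steps b b_m'; rewrite (_ : a = m.+2) //; lia.
- lia.
Qed.

Lemma realizable_full_levels m : realizable (full_levels m).
Proof.
elim: m => [|m IH]; first by exists [:: 0; 1].
apply: realizable_level => // [[a c] /mem_take | b b_m].
  by rewrite mem_ltn_pairs /= => lt_acm; apply: has_step_full_levels; lia.
exact: ltn_bin2.
Qed.

Lemma has_NLC_realizable k T :
  realizable T -> locating_windows k T -> has_NLC (cycle_rel (size T)) k.
Proof.
move=> [s _ perm_s]; rewrite -(perm_size perm_s) size_windows.
by rewrite -(locating_windows_perm k perm_s); apply: has_NLC_windows.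
Qed.

Lemma has_NLC_partial_level z t d : 1 < z -> t <= 'C(z, 2) -> d <= z -> 0 < t + d ->
  (forall b, b < d -> 'C(b, 2) < t) ->
  has_NLC (cycle_rel (z * 'C(z, 2) + 3 * t + 2 * d)) z.+1.
Proof.
case: z => [|[|m]] // _ le_t le_d td_gt0 tri_t.
rewrite -size_full_levels -addnA -(@size_level m.+2 t d) // -size_cat.
apply: has_NLC_realizable.
  apply: realizable_level => // [|[a c] /mem_take]; first exact: realizable_full_levels.
  by rewrite mem_ltn_pairs /= => lt_acm; apply: has_step_full_levels; lia.
exact/locating_level/locating_full_levels.
Qed.

Lemma take_ltn_pairs_small t z : t <= 3 <= z -> {subset take t (ltn_pairs z) <= ltn_pairs 3}.
Proof.
move=> /andP [le_t3 le_3z] p; have [r ->] := ltn_pairs_prefix le_3z.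
rewrite take_cat size_ltn_pairs (_ : 'C(3, 2) = 3) //.
case: ltnP => [_ /mem_take // | le_3t]; rewrite (_ : t - 3 = 0) ?take0 ?cats0 //; lia.
Qed.

Lemma has_NLC_next_level z r t : 2 < z -> r <= 2 -> 0 < t <= 2 ->
  has_NLC (cycle_rel (z.+1 * 'C(z.+1, 2) - 2 * r + 3 * t)) z.+2.
Proof.
case: z => [|[|[|m]]] // _ le_r t_le.
set B := full_levels m.+1 ++ level m.+3 'C(m.+3, 2) (m.+3 - r).
have le_tC : t <= 'C(m.+4, 2).
  by apply: leq_trans (leq_bin2l 2 (_ : 4 <= m.+4)); rewrite // (_ : 'C(4, 2) = 6) //; lia.
have -> : m.+4 * 'C(m.+4, 2) - 2 * r + 3 * t = size (B ++ level m.+4 t 0).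
  by rewrite size_cat /B size_cat size_full_levels !size_level // (states_succ m.+3); lia.
have real_B : realizable B.
  apply: realizable_level (realizable_full_levels m.+1) _ _ => // [|[a c] /mem_take | b b_r].
  - exact: leq_subr.
  - by rewrite mem_ltn_pairs => lt_acm; apply: has_step_full_levels; move: lt_acm => /=; lia.
  - by apply: ltn_bin2; lia.
apply: has_NLC_realizable.
  have sub3 : {subset take t (ltn_pairs m.+4) <= ltn_pairs 3}.
    by apply: take_ltn_pairs_small; lia.
  apply: realizable_level real_B _ _ => // -[a c] /sub3.
  by rewrite mem_ltn_pairs /= => lt_ac3; apply/has_step_catl/has_step_full_levels; lia.
apply: locating_level => //; first lia.
apply: locating_level (locating_full_levels m.+1) => //; first exact: leq_subr.
by rewrite addn_gt0 bin_gt0.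
Qed.

Lemma level_decomposition z x : 1 < z -> 3 <= x <= 3 * 'C(z, 2) + 2 * z ->
  x != 4 -> x != 3 * 'C(z, 2) + 2 * z - 1 ->
  exists t d, [/\ x = 3 * t + 2 * d, t <= 'C(z, 2), d <= z, 0 < t + d &
                 forall b, b < d -> 'C(b, 2) < t].
Proof.
case: z => [|z] // z_gt1 /andP [x_ge3 x_le] x_neq4 x_neq.
have CS : 'C(z.+1, 2) = 'C(z, 2) + z by rewrite binS bin1.
case: (leqP x (3 * 'C(z.+1, 2) + 2)) => [x_small | x_large].
  have := divn_eq x 3; have := ltn_pmod x (isT : 0 < 3).
  case: (x %% 3) => [|[|[|r]]] // _ xE.
  - by exists (x %/ 3), 0; split => //; lia.
  - exists (x %/ 3).-1, 2; split => //; try lia.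
    by move=> b b_2; rewrite (_ : 'C(b, 2) = 0); [lia | case: b b_2 => [|[|]]].
  - exists (x %/ 3), 1; split => //; try lia.
    by move=> b; rewrite ltnS leqn0 => /eqP ->; rewrite bin_small //; lia.
set y := x - 3 * 'C(z.+1, 2).
have := divn_eq y 2; have := ltn_pmod y (isT : 0 < 2).
case: (y %% 2) => [|[|r]] // _ yE.
  exists 'C(z.+1, 2), (y %/ 2); split => //; try lia.
  by move=> b b_y; apply: ltn_bin2; lia.
exists 'C(z.+1, 2).-1, (y %/ 2).+2; split => //; try lia.
by move=> b b_y; have := @leq_bin2l b z 2; lia.
Qed.

Lemma has_NLC_small n : n \in [:: 10; 11; 13] -> has_NLC (cycle_rel n) 4.
Proof.
rewrite !inE => /or3P [] /eqP ->.
- exact: (@has_NLC_windows 4 [:: 0; 1; 0; 1; 2; 0; 1; 3; 0; 3]).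
- exact: (@has_NLC_windows 4 [:: 0; 1; 0; 1; 2; 0; 1; 3; 0; 2; 3]).
- exact: (@has_NLC_windows 4 [:: 0; 1; 0; 1; 2; 0; 1; 3; 0; 2; 0; 2; 3]).
Qed.

Lemma has_NLC_past_full_level z x : 2 < z -> x \in [:: 1; 2; 4] ->
  has_NLC (cycle_rel (z * 'C(z, 2) + x)) z.+1.
Proof.
case: z => [|[|[|[|w]]]] // _ x_in.
  by apply: has_NLC_small; move: x_in; rewrite !inE => /or3P [] /eqP ->.
have [r [t [le_r t_le xE]]] : exists r t, [/\ r <= 2, 0 < t <= 2 & x + 2 * r = 3 * t].
  by move: x_in; rewrite !inE => /or3P [] /eqP ->; [exists 1, 1 | exists 2, 2 | exists 1, 2].
have C_gt0 : 0 < 'C(w.+4, 2) by rewrite bin_gt0.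
rewrite (_ : _ + _ = w.+4 * 'C(w.+4, 2) - 2 * r + 3 * t); first exact: has_NLC_next_level.
lia.
Qed.

Lemma has_NLC_cycle z n : 1 < z -> 9 <= n -> z * 'C(z, 2) < n <= z.+1 * 'C(z.+1, 2) ->
  n != (z.+1 * 'C(z.+1, 2)).-1 -> has_NLC (cycle_rel n) z.+1.
Proof.
move=> z_gt1 n_ge9 /andP [lo hi] n_neq; rewrite states_succ in hi n_neq.
have -> : n = z * 'C(z, 2) + (n - z * 'C(z, 2)) by lia.
have [x_small | x_big] := boolP (n - z * 'C(z, 2) \in [:: 1; 2; 4]).
  apply: has_NLC_past_full_level (x_small); move: x_small; rewrite !inE.
  by case: z z_gt1 {hi n_neq lo} => [|[|[|z]]] // _; rewrite (_ : 'C(2, 2) = 1) //; lia.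
have [t [d [-> le_t le_d td_gt0 tri_t]]] : exists t d,
    [/\ n - z * 'C(z, 2) = 3 * t + 2 * d, t <= 'C(z, 2), d <= z, 0 < t + d &
        forall b, b < d -> 'C(b, 2) < t].
  by apply: level_decomposition => //; move: x_big; rewrite !inE; lia.
by rewrite addnA; apply: has_NLC_partial_level.
Qed.

Unset Implicit Arguments.

Theorem theorem3 (n n0 : nat) :
  9 <= n ->
  2 * n <= n0 ^ 3 - n0 ^ 2 ->
  (forall k, 2 * n <= k ^ 3 - k ^ 2 -> n0 <= k) ->
  is_chiL2 (cycle_rel n)
    (if 2 * n.+1 == n0 ^ 3 - n0 ^ 2 then n0.+1 else n0).
Proof.
rewrite cube_sub_square => n_ge9 n_le n0_min.
have n0_le k : has_NLC (cycle_rel n) k -> n0 <= k.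
  by move/NLC_le_states => n_le_k; apply: n0_min; rewrite cube_sub_square; lia.
have [z n0E] : exists z, n0 = z.+1.
  by exists n0.-1; case: n0 n_le {n0_min n0_le} => // /=; lia.
subst n0; have z_gt1 : 1 < z.
  by case: z n_le {n0_min n0_le} => [|[|z]] //; rewrite ?binn ?(@bin_small 1 2) //; lia.
have n_gt : z * 'C(z, 2) < n.
  by rewrite ltnNge; apply/negP => le_n; have := n0_min z; rewrite cube_sub_square ltnn; lia.
rewrite eqn_mul2l /=; case: eqP => [almost | not_almost].
  split=> [|k NLC_k]; last first.
    rewrite ltn_neqAle n0_le // andbT; apply/eqP => kE; move: NLC_k.
    by rewrite -kE => /(NLC_not_almost_full (ltn_trans (ltn0Sn 7) n_ge9)); rewrite -almost eqxx.
  have z_gt2 : 2 < z.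
    case: z z_gt1 almost {n_le n_gt n0_min n0_le} => [|[|[|z]]] // _.
    by rewrite (_ : 'C(3, 2) = 3) //; lia.
  by rewrite (_ : n = z.+1 * 'C(z.+1, 2) - 2 * 2 + 3 * 1); [apply: has_NLC_next_level | lia].
split=> //; apply: has_NLC_cycle; rewrite ?n_gt //; first lia.
by apply/eqP; lia.
Qed.
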